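(* Let $f(x_1,x_2)=(-2+x_1+x_2)^2$ and $g(x_1,x_2)=1-x_1^2-x_2^2$; the global minimum of $f$ on $\{x: g(x)\geqslant 0\}$ is $2(3-2\sqrt{2})>0$. For every $r\in\mathbb{N}$ and every $\lambda\geqslant 0$, there do not exist SDSOS polynomials $\sigma_0,\sigma_1$ such that $$(x_1^2+x_2^2)^r\,(f(x_1,x_2)-\lambda)=\sigma_0(x_1,x_2)+\sigma_1(x_1,x_2)\,g(x_1,x_2).$$ Hence the optimal value of the r-SDSOS (and therefore of the r-DSOS) relaxation, $\sup\{\lambda: (x_1^2+x_2^2)^r(f-\lambda)=\sigma_0+\sigma_1 g,\ \sigma_0,\sigma_1 \text{ SDSOS (resp. DSOS)}\}$, is at most $0$ for every $r$, so these hierarchies do not converge to the global minimum.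
   Context: For $\alpha\in\mathbb{N}^2$ write $x^\alpha=x_1^{\alpha_1}x_2^{\alpha_2}$. A polynomial is SDSOS if it is of the form $\sum_k (p_k x^{\alpha(k)}+q_k x^{\beta(k)})^2$ (finite sum) with $p_k,q_k\in\mathbb{R}$ and $\alpha(k),\beta(k)\in\mathbb{N}^2$. A polynomial is DSOS if it is a finite nonnegative combination of polynomials of the forms $(x^\alpha)^2$, $(x^\alpha+x^\beta)^2$, $(x^\alpha-x^\beta)^2$; every DSOS polynomial is SDSOS. *)

From HB Require Import structures.
From mathcomp Require Import all_boot all_order all_algebra.
From mathcomp Require Import mpoly.
Set Implicit Arguments. Unset Strict Implicit. Unset Printing Implicit Defensive.
Import Order.TTheory GRing.Theory Num.Theory.
Local Open Scope ring_scope.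

(* Polynomials in x_1, x_2 : {mpoly R[2]}; variables 'X_0 (= x_1), 'X_1 (= x_2);
   the monomial x^alpha for alpha in N^2 is 'X_[alpha] with alpha : 'X_{1..2}. *)

Definition SDSOS (R : rcfType) (s : {mpoly R[2]}) : Prop :=
  exists l : seq (R * R * 'X_{1..2} * 'X_{1..2}),
    s = \sum_(t <- l) (t.1.1.1 *: 'X_[t.1.2] + t.1.1.2 *: 'X_[t.2]) ^+ 2.

Definition dsos_gen (R : rcfType) (a b : 'X_{1..2}) (k : option bool)
  : {mpoly R[2]} :=
  match k with
  | None => 'X_[a] ^+ 2
  | Some true => ('X_[a] + 'X_[b]) ^+ 2
  | Some false => ('X_[a] - 'X_[b]) ^+ 2
  end.

Definition DSOS (R : rcfType) (s : {mpoly R[2]}) : Prop :=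
  exists l : seq (R * 'X_{1..2} * 'X_{1..2} * option bool),
    (forall t, t \in l -> 0 <= t.1.1.1) /\
    s = \sum_(t <- l) t.1.1.1 *: dsos_gen R t.1.1.2 t.1.2 t.2.

Definition f_ex (R : rcfType) : {mpoly R[2]} :=
  ((-2) %:MP + 'X_0 + 'X_1) ^+ 2.
Definition g_ex (R : rcfType) : {mpoly R[2]} :=
  1 - 'X_0 ^+ 2 - 'X_1 ^+ 2.
Definition sqnorm2 (R : rcfType) : {mpoly R[2]} :=
  'X_0 ^+ 2 + 'X_1 ^+ 2.

From HB Require Import structures.
From mathcomp Require Import all_boot all_order all_algebra.
From mathcomp Require Import mpoly.
From mathcomp Require Import ring lra.
Set Implicit Arguments. Unset Strict Implicit. Unset Printing Implicit Defensive.
Import Order.TTheory GRing.Theory Num.Theory.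
Local Open Scope ring_scope.

(* The obstruction is the linear functional
     L p = p(c,c) + p(-c,c) + p(c,-c) - p(-c,-c),   c = 3/5.
   For a binomial square (u + v)^2 with u, v monomial terms, the four values
   only differ by the signs of u and v, and the alternating sum is 2 (u +- v)^2,
   so L >= 0 on SDSOS polynomials.  As g is even in each variable,
   L (s g) = g(c,c) L s with g(c,c) = 1 - 2c^2 > 0, whereas
   L ((x1^2 + x2^2)^r (f - lambda)) = (2c^2)^r (8 - 16c - 2 lambda) < 0.
   Any c with 1/2 < c <= 1/sqrt 2 works. *)

Lemma DSOS_SDSOS (R : rcfType) (s : {mpoly R[2]}) : DSOS s -> SDSOS s.
Proof.
case=> l [l_ge0 ->{s}]; elim: l l_ge0 => [|t l IHl] l_ge0.
  by exists [::]; rewrite !big_nil.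
have [|l' sum_l'] := IHl; first by move=> u lu; rewrite l_ge0 // in_cons lu orbT.
have t_sqr : t.1.1.1 = Num.sqrt t.1.1.1 ^+ 2 by rewrite sqr_sqrtr // l_ge0 ?mem_head.
pose sg : R := if t.2 is Some b then (-1) ^+ ~~ b else 0.
exists ((Num.sqrt t.1.1.1, Num.sqrt t.1.1.1 * sg, t.1.1.2, t.1.2) :: l').
rewrite !big_cons sum_l' /= -scalerA -scalerDr exprZn -t_sqr; congr (_ *: _ + _).
by rewrite {t_sqr}/sg /dsos_gen; case: t.2 => [[]|]; rewrite ?scale1r ?scaleN1r ?scale0r ?addr0.
Qed.

Section FlipSum.
Variable R : rcfType.

Definition vec2 (x y : R) : 'I_2 -> R := fun i => if val i == 0%N then x else y.

Definition flip_sum (c0 c1 : R) (p : {mpoly R[2]}) : R :=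
  p.@[vec2 c0 c1] + p.@[vec2 (- c0) c1] + p.@[vec2 c0 (- c1)]
  - p.@[vec2 (- c0) (- c1)].

Lemma mevalX_vec2 (m : 'X_{1..2}) x y :
  ('X_[m] : {mpoly R[2]}).@[vec2 x y] = x ^+ m ord0 * y ^+ m ord_max.
Proof.
rewrite mevalX big_ord_recr big_ord_recr big_ord0 /= mul1r.
by congr (_ ^+ m _ * _); apply: val_inj.
Qed.

Variables c0 c1 : R.
Local Notation L := (flip_sum c0 c1).

Lemma flip_sum0 : L 0 = 0.
Proof. by rewrite /flip_sum !meval0 !addr0 subrr. Qed.

Lemma flip_sumD p q : L (p + q) = L p + L q.
Proof. by rewrite /flip_sum !mevalD; ring. Qed.

Lemma flip_sum_ge0_big (I : Type) (l : seq I) (F : I -> {mpoly R[2]}) :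
  (forall i, 0 <= L (F i)) -> 0 <= L (\sum_(i <- l) F i).
Proof.
move=> F_ge0; elim: l => [|i l IHl]; first by rewrite big_nil flip_sum0.
by rewrite big_cons flip_sumD addr_ge0.
Qed.

(* The shape is that of the four evaluations of (p x^a + q x^b)^2, with
   u_i = c_i^(a_i), v_i = c_i^(b_i) and the signs sg of the odd exponents. *)
Lemma flip_sqr_ge0 (u0 u1 v0 v1 p q : R) (a0 a1 b0 b1 : bool) :
  let sg (b : bool) := (-1) ^+ b : R in
  0 <= (p * (u0 * u1) + q * (v0 * v1)) ^+ 2
     + (p * (sg a0 * u0 * u1) + q * (sg b0 * v0 * v1)) ^+ 2
     + (p * (u0 * (sg a1 * u1)) + q * (v0 * (sg b1 * v1))) ^+ 2
     - (p * (sg a0 * u0 * (sg a1 * u1)) + q * (sg b0 * v0 * (sg b1 * v1))) ^+ 2.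
Proof.
have := sqr_ge0 (p * u0 * u1 + q * v0 * v1).
have := sqr_ge0 (p * u0 * u1 - q * v0 * v1).
by case: a0; case: a1; case: b0; case: b1 => /=; nra.
Qed.

Lemma flip_sum_binomial_sqr_ge0 (p q : R) (a b : 'X_{1..2}) :
  0 <= L ((p *: 'X_[a] + q *: 'X_[b]) ^+ 2).
Proof.
rewrite /flip_sum !rmorphXn /= !mevalD !mevalZ !mevalX_vec2 !(exprNn c0) !(exprNn c1).
by rewrite -!(signr_odd _ (a _)) -!(signr_odd _ (b _)); apply: flip_sqr_ge0.
Qed.

Lemma SDSOS_flip_sum_ge0 s : SDSOS s -> 0 <= L s.
Proof.
by case=> l ->; apply: flip_sum_ge0_big => t; apply: flip_sum_binomial_sqr_ge0.
Qed.

Lemma flip_sumM_even p q :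
  q.@[vec2 (- c0) c1] = q.@[vec2 c0 c1] ->
  q.@[vec2 c0 (- c1)] = q.@[vec2 c0 c1] ->
  q.@[vec2 (- c0) (- c1)] = q.@[vec2 c0 c1] ->
  L (p * q) = q.@[vec2 c0 c1] * L p.
Proof. by move=> q10 q01 q11; rewrite /flip_sum !mevalM q10 q01 q11; ring. Qed.

End FlipSum.

Section Counterexample.
Variable R : rcfType.

Lemma meval_g_ex (x : 'I_2 -> R) : (g_ex R).@[x] = 1 - x 0 ^+ 2 - x 1 ^+ 2.
Proof. by rewrite /g_ex !mevalB meval1 !rmorphXn /= !mevalXU. Qed.

Lemma meval_f_ex (x : 'I_2 -> R) : (f_ex R).@[x] = (-2 + x 0 + x 1) ^+ 2.
Proof. by rewrite /f_ex rmorphXn /= !mevalD mevalC !mevalXU. Qed.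

Lemma meval_sqnorm2 (x : 'I_2 -> R) : (sqnorm2 R).@[x] = x 0 ^+ 2 + x 1 ^+ 2.
Proof. by rewrite /sqnorm2 !mevalD !rmorphXn /= !mevalXU. Qed.

Lemma flip_sumM_g_ex (c : R) p :
  flip_sum c c (p * g_ex R) = (1 - 2 * c ^+ 2) * flip_sum c c p.
Proof.
by rewrite flip_sumM_even !meval_g_ex /vec2 /= ?sqrrN // mulr_natl mulr2n opprD addrA.
Qed.

Lemma flip_sum_certificate (c : R) r lambda :
  flip_sum c c (sqnorm2 R ^+ r * (f_ex R - lambda%:MP))
  = (2 * c ^+ 2) ^+ r * (8 - 16 * c - 2 * lambda).
Proof.
rewrite /flip_sum !mevalM !rmorphXn /= !meval_sqnorm2 !mevalB !meval_f_ex !mevalC.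
have -> : 2 * c ^+ 2 = c ^+ 2 + c ^+ 2 by ring.
by rewrite /vec2 /= !sqrrN; ring.
Qed.

Lemma no_flip_sum_certificate r lambda s0 s1 :
  0 <= lambda -> 0 <= flip_sum (3 / 5) (3 / 5) s0 ->
  0 <= flip_sum (3 / 5) (3 / 5) s1 ->
  sqnorm2 R ^+ r * (f_ex R - lambda%:MP) <> s0 + s1 * g_ex R.
Proof.
move=> lambda_ge0 Ls0 Ls1 /(congr1 (flip_sum (3 / 5) (3 / 5))).
rewrite flip_sum_certificate flip_sumD flip_sumM_g_ex.
have lhs_lt0 : (2 * (3 / 5) ^+ 2) ^+ r * (8 - 16 * (3 / 5) - 2 * lambda) < 0 :> R.
  by rewrite pmulr_rlt0 ?exprn_gt0; lra.
have Ls1g_ge0 : 0 <= (1 - 2 * (3 / 5) ^+ 2) * flip_sum (3 / 5) (3 / 5) s1 :> R.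
  by rewrite mulr_ge0 //; lra.
lra.
Qed.


Lemma no_SDSOS_certificate r lambda : 0 <= lambda ->
  ~ exists s0 s1 : {mpoly R[2]},
      [/\ SDSOS s0, SDSOS s1 & sqnorm2 R ^+ r * (f_ex R - lambda%:MP) = s0 + s1 * g_ex R].
Proof.
move=> lambda_ge0 [s0 [s1 [/SDSOS_flip_sum_ge0 Ls0 /SDSOS_flip_sum_ge0 Ls1]]].
exact: no_flip_sum_certificate.
Qed.

Local Notation sqrt2 := (Num.sqrt (2 : R)).

Lemma sqr_sqrt2 : sqrt2 ^+ 2 = 2.
Proof. by rewrite sqr_sqrtr ?ler0n. Qed.

Lemma sqrt2_lt_3half : sqrt2 < 3 / 2.
Proof. by have := sqr_sqrt2; have := sqrtr_ge0 (2 : R); nra. Qed.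

Lemma disk_sum_le_sqrt2 (x0 x1 : R) : x0 ^+ 2 + x1 ^+ 2 <= 1 -> x0 + x1 <= sqrt2.
Proof.
move=> disk; rewrite (le_trans (ler_norm _)) // -sqrtr_sqr ler_wsqrtr //.
by have := sqr_ge0 (x0 - x1); nra.
Qed.

Lemma f_ex_min_on_disk (x : 'I_2 -> R) :
  0 <= (g_ex R).@[x] -> 2 * (3 - 2 * sqrt2) <= (f_ex R).@[x].
Proof.
rewrite meval_g_ex meval_f_ex => disk.
have sum_le : x 0 + x 1 <= sqrt2 by apply: disk_sum_le_sqrt2; lra.
have := sqr_sqrt2; have := sqrt2_lt_3half; nra.
Qed.

End Counterexample.

Theorem mainTheorem4 (R : rcfType) :
  (* the global minimum of f on {g >= 0} is 2(3 - 2 sqrt 2) > 0 *)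
  [/\ 0 < 2 * (3 - 2 * Num.sqrt (2 : R)),
      (forall x : 'I_2 -> R, 0 <= (g_ex R).@[x] ->
          2 * (3 - 2 * Num.sqrt 2) <= (f_ex R).@[x]),
      (exists x : 'I_2 -> R, 0 <= (g_ex R).@[x] /\
          (f_ex R).@[x] = 2 * (3 - 2 * Num.sqrt 2)),
  (* no r-SDSOS certificate for any r and lambda >= 0 *)
      (forall (r : nat) (lambda : R), 0 <= lambda ->
          ~ exists s0 s1 : {mpoly R[2]},
              [/\ SDSOS s0, SDSOS s1 &
                  sqnorm2 R ^+ r * (f_ex R - lambda%:MP) = s0 + s1 * g_ex R])
  & (* hence the r-SDSOS and r-DSOS values are <= 0 *)
      (forall (r : nat) (lambda : R),
          (exists s0 s1 : {mpoly R[2]},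
              [/\ SDSOS s0, SDSOS s1 &
                  sqnorm2 R ^+ r * (f_ex R - lambda%:MP) = s0 + s1 * g_ex R])
          \/
          (exists s0 s1 : {mpoly R[2]},
              [/\ DSOS s0, DSOS s1 &
                  sqnorm2 R ^+ r * (f_ex R - lambda%:MP) = s0 + s1 * g_ex R])
          -> lambda <= 0)].
Proof.
split.
- by have := sqrt2_lt_3half R; lra.
- exact: f_ex_min_on_disk.
- exists (vec2 (Num.sqrt 2 / 2) (Num.sqrt 2 / 2)).
  rewrite meval_g_ex meval_f_ex /vec2 /=.
  by have := sqr_sqrt2 R; split; nra.
- exact: no_SDSOS_certificate.
- move=> r lambda cert; rewrite leNgt; apply/negP => /ltW lambda_ge0.
  apply: (no_SDSOS_certificate (r := r) lambda_ge0).
  case: cert => [//|[s0 [s1 [D0 D1 E]]]].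
  by exists s0, s1; split => //; apply: DSOS_SDSOS.
Qed.
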